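(* Let $L$ be a finite-dimensional Lie superalgebra, let $0\to R\to F\xrightarrow{\pi}L\to 0$ be a free presentation of $L$, and let $D=(R\cap F')/[F,R]$. Then: (1) $\dim D\le\dim\mathrm{Ker}(\lambda)$ whenever $(T,\lambda)\in C(L)$ is a universal element; (2) for every $(K,\psi)\in C(L)$, $\mathrm{Ker}(\psi)$ is a homomorphic image of $D$.
   Context: Lie superalgebras over a field of characteristic $\neq 2,3$; homomorphisms are even. A free presentation of $L$ is a free Lie superalgebra $F$ on a $\mathbb{Z}_2$-graded set with a surjective homomorphism $\pi:F\to L$, $R=\mathrm{Ker}(\pi)$; $F'=[F,F]$. $C(L)$ is the class of pairs $(K,\lambda)$ with $\lambda:K\to L$ a surjective homomorphism and $\mathrm{Ker}(\lambda)\subseteq[K,K]\cap Z(K)$, where $Z(K)$ is the center. $(T,\sigma)\in C(L)$ is universal if for every $(K,\lambda)\in C(L)$ there is a homomorphism $\tau:T\to K$ with $\lambda\circ\tau=\sigma$. *)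

(* Lie superalgebras over a field k, carriers are k-modules
   (possibly infinite-dimensional), Z/2-grading given by two subspaces. *)
From HB Require Import structures.
From mathcomp Require Import all_boot all_algebra.
Set Implicit Arguments. Unset Strict Implicit. Unset Printing Implicit Defensive.
Import GRing.Theory.
Local Open Scope ring_scope.

Definition ssign (k : fieldType) (b : bool) : k := if b then -1 else 1.

(* A Lie superalgebra over k: V = V_false (+) V_true (even (+) odd),
   bilinear graded bracket, super skew-symmetry, super Jacobi identity. *)
Record lieSuperAlg (k : fieldType) := LieSuperAlg {
  lsa_car :> lmodType k;
  lsa_part : bool -> lsa_car -> Prop;
  lsa_br : lsa_car -> lsa_car -> lsa_car;
  lsa_part0 : forall b, lsa_part b 0;
  lsa_partL : forall b (a : k) x y, lsa_part b x -> lsa_part b y -> lsa_part b (a *: x + y);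
  lsa_decomp : forall v, exists v0 v1, lsa_part false v0 /\ lsa_part true v1 /\ v = v0 + v1;
  lsa_disj : forall v, lsa_part false v -> lsa_part true v -> v = 0;
  lsa_brL : forall (a : k) x y z, lsa_br (a *: x + y) z = a *: lsa_br x z + lsa_br y z;
  lsa_brR : forall (a : k) x y z, lsa_br z (a *: x + y) = a *: lsa_br z x + lsa_br z y;
  lsa_brP : forall i j x y, lsa_part i x -> lsa_part j y -> lsa_part (addb i j) (lsa_br x y);
  lsa_skew : forall i j x y, lsa_part i x -> lsa_part j y ->
     lsa_br x y = - (ssign k (i && j) *: lsa_br y x);
  lsa_jacobi : forall i j l x y z, lsa_part i x -> lsa_part j y -> lsa_part l z ->
     ssign k (i && l) *: lsa_br x (lsa_br y z) + ssign k (j && i) *: lsa_br y (lsa_br z x)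
     + ssign k (l && j) *: lsa_br z (lsa_br x y) = 0
}.

Section Defs.
Variable k : fieldType.

Definition is_hom (L M : lieSuperAlg k) (f : L -> M) : Prop :=
  (forall (a : k) x y, f (a *: x + y) = a *: f x + f y) /\
  (forall b x, @lsa_part _ L b x -> @lsa_part _ M b (f x)) /\
  (forall x y, f (@lsa_br _ L x y) = @lsa_br _ M (f x) (f y)).

Definition span (V : lmodType k) (P : V -> Prop) (v : V) : Prop :=
  exists s : seq (k * V), (forall p, p \in s -> P p.2) /\ v = \sum_(p <- s) p.1 *: p.2.

Definition brsp (L : lieSuperAlg k) (A B : L -> Prop) : L -> Prop :=
  span (fun z => exists a b, A a /\ B b /\ z = @lsa_br _ L a b).

Definition derived (L : lieSuperAlg k) : L -> Prop :=
  brsp (fun _ => True) (fun _ => True).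

Definition center (L : lieSuperAlg k) (z : L) : Prop :=
  forall x, @lsa_br _ L z x = 0.

Definition finite_dim (L : lieSuperAlg k) : Prop :=
  exists n (v : 'I_n -> L), forall x, exists c : 'I_n -> k, x = \sum_i c i *: v i.

Definition is_free_on (X : Type) (par : X -> bool) (F : lieSuperAlg k) (iota : X -> F) : Prop :=
  (forall x, @lsa_part _ F (par x) (iota x)) /\
  forall (M : lieSuperAlg k) (g : X -> M), (forall x, @lsa_part _ M (par x) (g x)) ->
    exists phi : F -> M, is_hom phi /\ (forall x, phi (iota x) = g x) /\
      forall psi : F -> M, is_hom psi -> (forall x, psi (iota x) = g x) -> psi =1 phi.

Definition inC (L Kk : lieSuperAlg k) (lam : Kk -> L) : Prop :=
  is_hom lam /\ (forall y, exists x, lam x = y) /\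
  (forall x, lam x = 0 -> @derived Kk x /\ @center Kk x).

Definition universal (L T : lieSuperAlg k) (sigma : T -> L) : Prop :=
  inC sigma /\
  forall (Kk : lieSuperAlg k) (lam : Kk -> L), inC lam ->
    exists tau : T -> Kk, is_hom tau /\ forall t, lam (tau t) = sigma t.

(* dim (U / W) >= n, for subspaces W <= U of V *)
Definition qdim_ge (V : lmodType k) (U W : V -> Prop) (n : nat) : Prop :=
  exists v : 'I_n -> V, (forall i, U (v i)) /\
    forall c : 'I_n -> k, W (\sum_i c i *: v i) -> forall i, c i = 0.

(* dim (U1 / W1) <= dim (U2 / W2) (all infinite dimensions identified) *)
Definition qdim_le (V1 V2 : lmodType k) (U1 W1 : V1 -> Prop) (U2 W2 : V2 -> Prop) : Prop :=
  forall n, qdim_ge U1 W1 n -> qdim_ge U2 W2 n.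

(* S (a subspace of M) is a homomorphic image of the Lie superalgebra U/W
   (U, W graded subspaces of L, W <= U, U closed under brackets modulo W):
   there is a map f defined on U, linear, even, bracket preserving, vanishing
   on W (so it factors through U/W) and with image exactly S. *)
Definition quot_hom_image (L M : lieSuperAlg k) (U W : L -> Prop) (S : M -> Prop) : Prop :=
  exists f : L -> M,
    (forall x, U x -> S (f x)) /\
    (forall (a : k) x y, U x -> U y -> f (a *: x + y) = a *: f x + f y) /\
    (forall b x, U x -> @lsa_part _ L b x -> @lsa_part _ M b (f x)) /\
    (forall x y, U x -> U y -> f (@lsa_br _ L x y) = @lsa_br _ M (f x) (f y)) /\
    (forall x, W x -> f x = 0) /\
    (forall z, S z -> exists x, U x /\ f x = z).

End Defs.

(* Part (2).  Freeness of F lifts pi through psi to beta : F -> K with psi \o beta = pi.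
   Then beta maps R into the central ideal Ker psi, so it kills [F, R] and maps R ∩ F'
   into Ker psi; conversely K = beta F + Ker psi with Ker psi central gives
   [K, K] = beta [F, F], so Ker psi ⊆ [K, K] is covered by beta (R ∩ F').

   Part (1).  Pick homogeneous u_j, j in J, spanning L modulo [L, L] with J minimal, lift
   them to homogeneous g_j in F and put V = span (g_j) + F'.  Minimality of J gives
   V ∩ R ⊆ F', so K = V / [F, R] with the map induced by pi lies in C(L), with kernel
   exactly D.  For a universal (T, sigma) the map tau : T -> K over L again covers
   [K, K] ⊇ D, and the preimage of D lies in Ker sigma, so dim D <= dim Ker sigma. *)

From HB Require Import structures.
From mathcomp Require Import all_boot all_algebra.
From mathcomp Require Import boolp.
Set Implicit Arguments. Unset Strict Implicit. Unset Printing Implicit Defensive.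
Import GRing.Theory.
Local Open Scope ring_scope.

Section Subspaces.
Variables (k : fieldType) (V : lmodType k).
Implicit Types (P Q : V -> Prop).

Definition subspace P := P 0 /\ forall a x y, P x -> P y -> P (a *: x + y).

Section Closure.
Variables (P : V -> Prop) (sP : subspace P).

Lemma subspace0 : P 0. Proof. exact: sP.1. Qed.

Lemma subspaceD x y : P x -> P y -> P (x + y).
Proof. by move=> Px Py; rewrite -[x]scale1r; apply: sP.2. Qed.

Lemma subspaceZ a x : P x -> P (a *: x).
Proof. by move=> Px; rewrite -[_ *: _]addr0; apply: sP.2 => //; apply: subspace0. Qed.

Lemma subspaceN x : P x -> P (- x).
Proof. by move=> Px; rewrite -scaleN1r; apply: subspaceZ. Qed.

Lemma subspaceB x y : P x -> P y -> P (x - y).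
Proof. by move=> Px Py; apply: subspaceD => //; apply: subspaceN. Qed.

Lemma subspace_sum (I : Type) (r : seq I) (J : pred I) (E : I -> V) :
  (forall i, J i -> P (E i)) -> P (\sum_(i <- r | J i) E i).
Proof. by move=> PE; apply: big_ind => //; [apply: subspace0 | apply: subspaceD]. Qed.

End Closure.

Lemma span_ind P Q : Q 0 -> (forall a x y, P x -> Q y -> Q (a *: x + y)) ->
  forall v, span P v -> Q v.
Proof.
move=> Q0 QS v [s [Ps ->]]; elim: s Ps => [|[a x] s IH] Ps; first by rewrite big_nil.
rewrite big_cons /=; apply: QS; first by apply: (Ps (a, x)); rewrite inE eqxx.
by apply: IH => p ps; apply: Ps; rewrite inE ps orbT.
Qed.

Lemma span_min P Q : subspace Q -> (forall x, P x -> Q x) -> forall v, span P v -> Q v.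
Proof. by move=> sQ PQ; apply: span_ind => [|a x y /PQ]; [apply: subspace0 | apply: sQ.2]. Qed.

Lemma span_gen P x : P x -> span P x.
Proof.
by move=> Px; exists [:: (1, x)]; rewrite big_seq1 scale1r; split=> // p; rewrite inE => /eqP ->.
Qed.

Lemma span_subspace P : subspace (span P).
Proof.
split; first by exists [::]; rewrite big_nil.
move=> a x y [s [Ps ->]] [t [Pt ->]].
exists ([seq (a * p.1, p.2) | p <- s] ++ t); split.
  by move=> p; rewrite mem_cat => /orP [/mapP [q /Ps Pq ->] | /Pt].
rewrite big_cat big_map /= scaler_sumr; congr (_ + _).
by apply: eq_bigr => p _; rewrite scalerA.
Qed.

End Subspaces.

Section LinearFunctions.
Variables (k : fieldType) (U V : lmodType k) (f : U -> V) (f_lin : linear f).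
Let fL : {linear U -> V} := HB.pack f (GRing.isLinear.Build k U V *:%R f f_lin).

Lemma lin0 : f 0 = 0. Proof. exact: (linear0 fL). Qed.
Lemma linD x y : f (x + y) = f x + f y. Proof. exact: (linearD fL). Qed.
Lemma linZ a x : f (a *: x) = a *: f x. Proof. exact: (linearZ_LR fL). Qed.
Lemma linB x y : f (x - y) = f x - f y. Proof. exact: (linearB fL). Qed.
Lemma lin_sum (I : Type) (r : seq I) (J : pred I) (E : I -> U) :
  f (\sum_(i <- r | J i) E i) = \sum_(i <- r | J i) f (E i).
Proof. exact: (linear_sum fL). Qed.

Lemma kernel_subspace : subspace (fun x => f x = 0).
Proof. by split=> [|a x y fx fy]; rewrite ?lin0 // f_lin fx fy scaler0 addr0. Qed.

End LinearFunctions.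

Lemma exists_minimal_set (I : finType) (P : {set I} -> Prop) (J : {set I}) :
  P J -> exists2 J0, P J0 & forall j, j \in J0 -> ~ P (J0 :\ j).
Proof.
have [n] := ubnP #|J|; elim: n J => // n IH J; rewrite ltnS => leJn PJ.
have [[j jJ PJj] | Jmin] := pselect (exists2 j, j \in J & P (J :\ j)).
  by apply: IH PJj; move: leJn; rewrite (cardsD1 j J) jJ.
by exists J => // j jJ PJj; apply: Jmin; exists j.
Qed.

(* f embeds U1 / W1 into M, inside the image of U2 under tau. *)
Lemma qdim_le_lift (k : fieldType) (V1 V2 M : lmodType k) (U1 W1 : V1 -> Prop)
    (U2 : V2 -> Prop) (f : V1 -> M) (tau : V2 -> M) :
  subspace U1 -> (forall a x y, U1 x -> U1 y -> f (a *: x + y) = a *: f x + f y) ->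
  linear tau -> (forall x, U1 x -> f x = 0 -> W1 x) ->
  (forall x, U1 x -> exists2 t, U2 t & tau t = f x) ->
  qdim_le U1 W1 U2 (fun t => t = 0).
Proof.
move=> sU flin tlin fker flift n [d [Ud dind]].
have [t Ut tf] := fin_all_exists2 (fun i => flift _ (Ud i)).
exists t; split=> // c tc0; apply: dind.
have f0 : f 0 = 0.
  have := flin 1 0 0 (subspace0 sU) (subspace0 sU); rewrite !scale1r addr0 => e.
  by apply: (addrI (f 0)); rewrite addr0 -e.
have fsum r : U1 (\sum_(i <- r) c i *: d i) /\
    f (\sum_(i <- r) c i *: d i) = \sum_(i <- r) c i *: f (d i).
  elim: r => [|i r [Ur fr]]; rewrite ?big_nil ?big_cons; first by split; [apply: subspace0 |].
  by split; [apply: sU.2 | rewrite flin // fr].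
apply: fker; first exact: (fsum _).1.
rewrite (fsum _).2 -[RHS](lin0 tlin) -tc0 (lin_sum tlin).
by apply: eq_bigr => i _; rewrite (linZ tlin) tf.
Qed.

Section LieSuperalgebras.
Variables (k : fieldType) (F : lieSuperAlg k).
Local Notation br := (@lsa_br k F).
Local Notation part := (@lsa_part k F).
Implicit Types (A B N : F -> Prop).

Lemma br_linl z : linear (br^~ z). Proof. by move=> a x y; apply: lsa_brL. Qed.
Lemma br_linr z : linear (br z). Proof. by move=> a x y; apply: lsa_brR. Qed.

Lemma br0l z : br 0 z = 0. Proof. exact: (lin0 (br_linl z)). Qed.
Lemma br0r z : br z 0 = 0. Proof. exact: (lin0 (br_linr z)). Qed.
Lemma brDl x y z : br (x + y) z = br x z + br y z. Proof. exact: (linD (br_linl z) x y). Qed.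
Lemma brDr x y z : br z (x + y) = br z x + br z y. Proof. exact: (linD (br_linr z) x y). Qed.
Lemma brBl x y z : br (x - y) z = br x z - br y z. Proof. exact: (linB (br_linl z) x y). Qed.
Lemma brBr x y z : br z (x - y) = br z x - br z y. Proof. exact: (linB (br_linr z) x y). Qed.

Lemma brsp_subspace A B : subspace (brsp A B).
Proof. exact: span_subspace. Qed.

Lemma brsp_gen A B a b : A a -> B b -> brsp A B (br a b).
Proof. by move=> Aa Bb; apply: (span_gen (P := fun z => _)); exists a, b. Qed.

Lemma part_subspace b : subspace (part b).
Proof. by split; [apply: lsa_part0 | move=> a x y; apply: lsa_partL]. Qed.

Lemma part_decomp_uniq x0 x1 y0 y1 :
  part false x0 -> part true x1 -> part false y0 -> part true y1 ->
  x0 + x1 = y0 + y1 -> x0 = y0 /\ x1 = y1.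
Proof.
move=> px0 px1 py0 py1 e.
have exy : x0 - y0 = y1 - x1 by rewrite -(addrK x1 x0) e addrAC [y0 + y1]addrC addrK.
have /eqP : x0 - y0 = 0.
  by apply: lsa_disj; [|rewrite exy]; apply: subspaceB => //; apply: part_subspace.
by rewrite subr_eq0 => /eqP e0; split => //; move: e; rewrite e0 => /addrI.
Qed.

Definition graded A := forall x, A x -> exists x0 x1,
  A x0 /\ A x1 /\ part false x0 /\ part true x1 /\ x = x0 + x1.

Lemma graded_predT : graded (fun _ => True).
Proof. by move=> x _; have [x0 [x1 [? [? ->]]]] := lsa_decomp x; exists x0, x1. Qed.

Lemma graded_span (P : F -> Prop) :
  (forall z, P z -> exists z0 z1, span P z0 /\ span P z1 /\
     part false z0 /\ part true z1 /\ z = z0 + z1) -> graded (span P).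
Proof.
have sS := span_subspace P; have sp b := part_subspace b.
move=> gP; apply: span_ind.
  by exists 0, 0; rewrite addr0; do !split; apply: subspace0.
move=> a x y /gP [x0 [x1 [S0 [S1 [p0 [p1 ->]]]]]] [y0 [y1 [T0 [T1 [q0 [q1 ->]]]]]].
exists (a *: x0 + y0), (a *: x1 + y1).
do ![split; first by [apply: sS.2 | apply: (sp _).2]].
by rewrite scalerDr addrACA.
Qed.

Lemma graded_brsp A B : graded A -> graded B -> graded (brsp A B).
Proof.
move=> gA gB; apply: graded_span => z [a [b [/gA [a0 [a1 [A0 [A1 [pa0 [pa1 ->]]]]]]]]].
move=> [/gB [b0 [b1 [B0 [B1 [pb0 [pb1 ->]]]]]] ->].
have sS := brsp_subspace A B.
exists (br a0 b0 + br a1 b1), (br a0 b1 + br a1 b0).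
do ![split; first by apply: subspaceD => //; apply: brsp_gen].
have sp b := part_subspace b.
split; first exact: (subspaceD (sp _) (lsa_brP pa0 pb0) (lsa_brP pa1 pb1)).
split; first exact: (subspaceD (sp _) (lsa_brP pa0 pb1) (lsa_brP pa1 pb0)).
by rewrite !brDl !brDr [br a1 b0 + _]addrC addrACA.
Qed.

Lemma graded_derived : graded (@derived k F).
Proof. exact: graded_brsp graded_predT graded_predT. Qed.

(* Super skew-symmetry moves homogeneous brackets, hence by gradedness all of them. *)
Lemma brsp_swap A B a b : graded A -> graded B -> A a -> B b -> brsp B A (br a b).
Proof.
move=> gA gB /gA [a0 [a1 [A0 [A1 [pa0 [pa1 ->]]]]]] /gB [b0 [b1 [B0 [B1 [pb0 [pb1 ->]]]]]].
have sS := brsp_subspace B A.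
have swap i j x y : A x -> B y -> part i x -> part j y -> brsp B A (br x y).
  move=> Ax By px py; rewrite (lsa_skew px py).
  by apply/(subspaceN sS)/(subspaceZ sS)/brsp_gen.
by rewrite !brDl !brDr; do !apply: subspaceD => //; apply: swap; eassumption.
Qed.

Lemma central_right N : graded N -> (forall n x, N n -> br n x = 0) ->
  forall n x, N n -> br x n = 0.
Proof.
move=> gN Ncen n x /gN [n0 [n1 [N0 [N1 [pn0 [pn1 ->]]]]]].
have [x0 [x1 [px0 [px1 ->]]]] := lsa_decomp x.
have cen i j y z : N z -> part i y -> part j z -> br y z = 0.
  by move=> Nz py pz; rewrite (lsa_skew py pz) Ncen // scaler0 oppr0.
by rewrite !brDl !brDr !(cen _ _ _ _ N0 px0 pn0, cen _ _ _ _ N1 px0 pn1,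
  cen _ _ _ _ N0 px1 pn0, cen _ _ _ _ N1 px1 pn1) !addr0.
Qed.

End LieSuperalgebras.

Section Homomorphisms.
Variable k : fieldType.
Implicit Types (L M K : lieSuperAlg k).

Lemma hom_comp L M K (f : L -> M) (g : M -> K) :
  is_hom f -> is_hom g -> is_hom (g \o f).
Proof.
move=> [fl [fp fb]] [gl [gp gb]]; split; first by move=> a x y /=; rewrite fl gl.
by split=> [b x /fp /gp|x y /=]; rewrite ?fb ?gb.
Qed.

Lemma derived_hom L M (f : L -> M) x : is_hom f -> derived x -> derived (f x).
Proof.
move=> [fl [_ fb]]; have sD := brsp_subspace (fun _ : M => True) (fun _ => True).
move: x; apply: span_ind; first by rewrite (lin0 fl); apply: subspace0 sD.
by move=> a _ y [p [q [_ [_ ->]]]] dy; rewrite fl fb; apply: sD.2 => //; apply: brsp_gen.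
Qed.

Lemma graded_kernel L M (f : L -> M) : is_hom f -> graded (fun x => f x = 0).
Proof.
move=> [fl [fp _]] x fx0; have [x0 [x1 [p0 [p1 ex]]]] := lsa_decomp x.
have e : f x0 + f x1 = 0 + 0 by rewrite addr0 -(linD fl) -ex.
have [f0 f1] := part_decomp_uniq (fp _ _ p0) (fp _ _ p1) (lsa_part0 _ _) (lsa_part0 _ _) e.
by exists x0, x1.
Qed.

(* Lift an arbitrary preimage and keep its component of the right parity. *)
Lemma hom_lift_homogeneous L M (f : L -> M) b z :
  is_hom f -> (exists y, f y = z) -> lsa_part b z -> exists y, lsa_part b y /\ f y = z.
Proof.
move=> [fl [fp _]] [y <-] pz; have [y0 [y1 [p0 [p1 ey]]]] := lsa_decomp y.
have [e0 e1] : f y0 = (if b then 0 else f y) /\ f y1 = (if b then f y else 0).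
  apply: part_decomp_uniq (fp _ _ p0) (fp _ _ p1) _ _ _; rewrite -?(linD fl) -?ey;
    by case: b pz => pz; rewrite ?addr0 ?add0r //; apply: lsa_part0.
by case: b pz e0 e1 => pz e0 e1; [exists y1 | exists y0].
Qed.

Lemma inC_ker_central L K (psi : K -> L) n x :
  inC psi -> psi n = 0 -> lsa_br n x = 0 /\ lsa_br x n = 0.
Proof.
move=> [hp [_ hker]] pn; have cen m y : psi m = 0 -> lsa_br m y = 0 by move=> /hker[_ ->].
by split; [apply: cen | apply: (central_right (graded_kernel hp))].
Qed.

Lemma inC_id L : inC (@id L).
Proof.
split; first by do !split.
split=> [y|x ->]; first by exists y.
by split=> [|y]; [apply: subspace0 (brsp_subspace _ _) | apply: br0l].
Qed.

(* K is the image of beta plus a central kernel, so every bracket of K is the image of one. *)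
Lemma derived_in_image M K L (psi : K -> L) (beta : M -> K) :
  inC psi -> is_hom beta -> (forall y, exists x, psi (beta x) = psi y) ->
  forall z, derived z -> exists2 w, derived w & beta w = z.
Proof.
move=> psiC [bl [_ bbr]] onto; have [[pl _] _] := psiC.
have decomp y : exists x n, psi n = 0 /\ y = beta x + n.
  have [x ex] := onto y; exists x, (y - beta x).
  by rewrite (linB pl) ex subrr addrC subrK.
apply: span_ind; first by exists 0; [apply: subspace0 (brsp_subspace _ _) | apply: lin0].
move=> a _ y [p [q [_ [_ ->]]]] [w dw <-].
have [fp [np [np0 ->]]] := decomp p; have [fq [nq [nq0 ->]]] := decomp q.
exists (a *: lsa_br fp fq + w); first by apply: (brsp_subspace _ _).2 => //; apply: brsp_gen.
rewrite bl bbr !brDl !brDr (inC_ker_central _ psiC nq0).2.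
by rewrite (inC_ker_central _ psiC np0).1 (inC_ker_central _ psiC np0).1 !addr0.
Qed.

Lemma derived_surj_image L M (f : L -> M) : is_hom f -> (forall y, exists x, f x = y) ->
  forall z, derived z -> exists2 w, derived w & f w = z.
Proof. by move=> hf onto; apply: derived_in_image (inC_id _) hf _ => y; apply: onto. Qed.

Section FreePresentation.
Variables (L F : lieSuperAlg k) (X : Type) (par : X -> bool) (iota : X -> F).
Variables (hfree : is_free_on par iota) (pi : F -> L) (hpi : is_hom pi).

Lemma free_lift K (psi : K -> L) : is_hom psi -> (forall y, exists x, psi x = y) ->
  exists2 beta : F -> K, is_hom beta & forall x, psi (beta x) = pi x.
Proof.
move=> hpsi onto; have [_ [pp _]] := hpi.
have ppar x : lsa_part (par x) (pi (iota x)) by apply: pp; apply: hfree.1.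
have [g hg] := choice (fun x => hom_lift_homogeneous hpsi (onto _) (ppar x)).
have [beta [hbeta [beta_iota _]]] := hfree.2 K g (fun x => (hg x).1).
exists beta => // x; have [phi [_ [_ uniq]]] := hfree.2 L (pi \o iota) ppar.
have agree y : (psi \o beta) (iota y) = pi (iota y) by rewrite /= beta_iota (hg y).2.
by rewrite -[LHS]/((psi \o beta) x) (uniq _ (hom_comp hbeta hpsi) agree) (uniq _ hpi).
Qed.

Hypothesis pi_onto : forall y, exists x, pi x = y.

Lemma ker_quot_hom_image K (psi : K -> L) : inC psi ->
  quot_hom_image (fun x => pi x = 0 /\ derived x) (brsp (fun _ => True) (fun x => pi x = 0))
    (fun z => psi z = 0).
Proof.
move=> psiC; have [hpsi [psi_onto psi_ker]] := psiC.
have [beta hbeta psi_beta] := free_lift hpsi psi_onto; have [bl [bp bbr]] := hbeta.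
have beta_onto y : exists x, psi (beta x) = psi y.
  by have [x pix] := pi_onto (psi y); exists x; rewrite psi_beta.
exists beta; split; first by move=> x [pix _]; rewrite psi_beta.
split; first by move=> a x y _ _; apply: bl.
split; first by move=> b x _; apply: bp.
split; first by move=> x y _ _; apply: bbr.
split.
  apply: span_min (kernel_subspace bl) _ => _ [x [r [_ [pir ->]]]].
  by rewrite bbr; apply: (inC_ker_central _ psiC _).2; rewrite psi_beta.
move=> z psiz; have [dz _] := psi_ker z psiz.
have [w dw bw] := derived_in_image psiC hbeta beta_onto dz.
by exists w; do !split => //; rewrite -psi_beta bw.
Qed.

End FreePresentation.
End Homomorphisms.

Section Subquotient.
Variables (k : fieldType) (F : lieSuperAlg k) (V W : F -> Prop).
Local Notation br := (@lsa_br k F).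
Local Notation part := (@lsa_part k F).

Record graded_subquotient : Prop := GradedSubquotient {
  sq_subV : subspace V;
  sq_subW : subspace W;
  sq_WV : forall x, W x -> V x;
  sq_gradedV : graded V;
  sq_gradedW : graded W;
  sq_brV : forall x y, V x -> V y -> V (br x y);
  sq_brWl : forall x y, V x -> W y -> W (br x y);
  sq_brWr : forall x y, W x -> V y -> W (br x y) }.

Variable H : graded_subquotient.
Let sV := sq_subV H.
Let sW := sq_subW H.

Lemma sq_rep_ex x : exists y, `[< W (x - y) >].
Proof. by exists x; apply/asboolP; rewrite subrr; apply: subspace0 sW. Qed.

Definition sq_rep x := xchoose (sq_rep_ex x).

Lemma sq_rep_diff x : W (x - sq_rep x).
Proof. exact/asboolP/(xchooseP (sq_rep_ex x)). Qed.

Lemma sq_rep_eq x y : W (x - y) -> sq_rep x = sq_rep y.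
Proof.
move=> Wxy; apply: eq_xchoose => z; apply: asbool_equiv_eq; split=> Wz.
  rewrite (_ : y - z = (x - z) - (x - y)); first exact: (subspaceB sW).
  by rewrite opprB [RHS]addrC addrA subrK.
rewrite (_ : x - z = (x - y) + (y - z)); first exact: (subspaceD sW).
by rewrite addrA subrK.
Qed.

Lemma sq_repV x : V x -> V (sq_rep x).
Proof. by move=> Vx; rewrite -(subKr x (sq_rep x)); apply/(subspaceB sV)/(sq_WV H)/sq_rep_diff. Qed.

Lemma sq_rep_id x : sq_rep (sq_rep x) = sq_rep x.
Proof. by apply: sq_rep_eq; rewrite -opprB; apply/(subspaceN sW)/sq_rep_diff. Qed.

(* Elements of V/W are represented by the canonical representatives of their classes. *)
Record sq_type := SqElt {
  sq_val : F;
  sq_valP : `[< V sq_val /\ sq_rep sq_val = sq_val >] }.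

HB.instance Definition _ := [isSub for sq_val].
HB.instance Definition _ := [Choice of sq_type by <:].

Lemma sq_rep_in x : V x -> `[< V (sq_rep x) /\ sq_rep (sq_rep x) = sq_rep x >].
Proof. by move=> Vx; apply/asboolP; split; [apply: sq_repV | apply: sq_rep_id]. Qed.

Definition sq_of x : sq_type := insubd (SqElt (sq_rep_in (subspace0 sV))) (sq_rep x).

Lemma sq_valV q : V (sq_val q).
Proof. by have /asboolP[] := sq_valP q. Qed.

Lemma sq_of_val x : V x -> sq_val (sq_of x) = sq_rep x.
Proof. by move=> Vx; rewrite /sq_of insubdK //; apply: sq_rep_in. Qed.

Lemma sq_valK q : sq_of (sq_val q) = q.
Proof. by apply: val_inj; rewrite /= sq_of_val ?sq_valV //; have /asboolP[] := sq_valP q. Qed.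

Lemma sq_of_diff x : V x -> W (sq_val (sq_of x) - x).
Proof. by move=> Vx; rewrite sq_of_val // -opprB; apply/(subspaceN sW)/sq_rep_diff. Qed.

Lemma sq_of_eq x y : V x -> V y -> (sq_of x = sq_of y <-> W (x - y)).
Proof.
move=> Vx Vy; split=> [exy | /sq_rep_eq erep]; last by apply: val_inj; rewrite /= !sq_of_val.
rewrite (_ : x - y = (sq_val (sq_of y) - y) - (sq_val (sq_of x) - x)).
  by apply: (subspaceB sW); apply: sq_of_diff.
by rewrite exy opprB [RHS]addrC addrA subrK.
Qed.

Lemma sq_ind (P : sq_type -> Prop) : (forall x, V x -> P (sq_of x)) -> forall q, P q.
Proof. by move=> Pof q; rewrite -(sq_valK q); apply/Pof/sq_valV. Qed.

Definition sq_add q r := sq_of (sq_val q + sq_val r).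
Definition sq_opp q := sq_of (- sq_val q).
Definition sq_scale a q := sq_of (a *: sq_val q).
Definition sq_br q r := sq_of (br (sq_val q) (sq_val r)).

Lemma sq_of_eqW x y : V x -> V y -> W (x - y) -> sq_of x = sq_of y.
Proof. by move=> Vx Vy /(sq_of_eq Vx Vy). Qed.

Lemma sq_add_of x y : V x -> V y -> sq_add (sq_of x) (sq_of y) = sq_of (x + y).
Proof.
move=> Vx Vy; apply: sq_of_eqW (subspaceD sV (sq_valV _) (sq_valV _)) (subspaceD sV Vx Vy) _.
by rewrite opprD addrACA; apply: (subspaceD sW); apply: sq_of_diff.
Qed.

Lemma sq_opp_of x : V x -> sq_opp (sq_of x) = sq_of (- x).
Proof.
move=> Vx; apply: sq_of_eqW (subspaceN sV (sq_valV _)) (subspaceN sV Vx) _.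
by rewrite -opprD; apply/(subspaceN sW)/sq_of_diff.
Qed.

Lemma sq_scale_of a x : V x -> sq_scale a (sq_of x) = sq_of (a *: x).
Proof.
move=> Vx; apply: sq_of_eqW (subspaceZ sV a (sq_valV _)) (subspaceZ sV a Vx) _.
by rewrite -scalerBr; apply/(subspaceZ sW)/sq_of_diff.
Qed.

(* [x', y'] - [x, y] = [x' - x, y'] + [x, y' - y] lies in W because W is an ideal of V. *)
Lemma sq_br_of x y : V x -> V y -> sq_br (sq_of x) (sq_of y) = sq_of (br x y).
Proof.
move=> Vx Vy; apply: sq_of_eqW (sq_brV H (sq_valV _) (sq_valV _)) (sq_brV H Vx Vy) _.
set x' := sq_val (sq_of x); set y' := sq_val (sq_of y).
have -> : br x' y' - br x y = br (x' - x) y' + br x (y' - y) by rewrite brBl brBr addrA subrK.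
apply: (subspaceD sW); [apply: (sq_brWr H) | apply: (sq_brWl H)] => //.
- exact: sq_of_diff.
- exact: sq_valV.
- exact: sq_of_diff.
Qed.

Lemma sq_addA : associative sq_add.
Proof.
elim/sq_ind => x Vx; elim/sq_ind => y Vy; elim/sq_ind => z Vz.
by rewrite !sq_add_of ?addrA //; apply: (subspaceD sV).
Qed.

Lemma sq_addC : commutative sq_add.
Proof. by elim/sq_ind => x Vx; elim/sq_ind => y Vy; rewrite !sq_add_of // addrC. Qed.

Lemma sq_add0 : left_id (sq_of 0) sq_add.
Proof. by elim/sq_ind => x Vx; rewrite sq_add_of ?add0r //; apply: subspace0 sV. Qed.

Lemma sq_addN : left_inverse (sq_of 0) sq_opp sq_add.
Proof. by elim/sq_ind => x Vx; rewrite sq_opp_of // sq_add_of ?addNr //; apply: (subspaceN sV). Qed.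

Lemma sq_scaleA a b q : sq_scale a (sq_scale b q) = sq_scale (a * b) q.
Proof. by elim/sq_ind: q => x Vx; rewrite !sq_scale_of ?scalerA //; apply: (subspaceZ sV). Qed.

Lemma sq_scale1 : left_id 1 sq_scale.
Proof. by elim/sq_ind => x Vx; rewrite sq_scale_of // scale1r. Qed.

Lemma sq_scaleDr : right_distributive sq_scale sq_add.
Proof.
move=> a; elim/sq_ind => x Vx; elim/sq_ind => y Vy.
have [Vax Vay] := (subspaceZ sV a Vx, subspaceZ sV a Vy).
by rewrite sq_add_of // !sq_scale_of ?sq_add_of ?scalerDr //; apply: (subspaceD sV).
Qed.

Lemma sq_scaleDl q : {morph sq_scale^~ q : a b / a + b >-> sq_add a b}.
Proof.
elim/sq_ind: q => x Vx a b.
by rewrite !sq_scale_of // sq_add_of ?scalerDl //; apply: (subspaceZ sV).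
Qed.

HB.instance Definition _ := GRing.isZmodule.Build sq_type sq_addA sq_addC sq_add0 sq_addN.
HB.instance Definition _ := GRing.Zmodule_isLmodule.Build k sq_type
  sq_scaleA sq_scale1 sq_scaleDr sq_scaleDl.

End Subquotient.

Section SubquotientLie.
Variables (k : fieldType) (F : lieSuperAlg k) (V W : F -> Prop) (H : graded_subquotient V W).
Local Notation br := (@lsa_br k F).
Local Notation part := (@lsa_part k F).
Local Notation Q := (sq_type H).
Local Notation sq_of := (sq_of H).
Local Notation sq_br := (@sq_br _ _ _ _ H).
Let sV := sq_subV H.
Let sW := sq_subW H.

Ltac in_V := repeat first [ assumption | apply: (subspaceD sV) | apply: (subspaceZ sV)
  | apply: (subspaceN sV) | apply: (sq_brV H) | apply: (subspace0 sV) ].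

Lemma sq_ofD x y : V x -> V y -> sq_of x + sq_of y = sq_of (x + y).
Proof. exact: sq_add_of. Qed.

Lemma sq_ofZ a x : V x -> a *: sq_of x = sq_of (a *: x).
Proof. exact: sq_scale_of. Qed.

Lemma sq_ofN x : V x -> - sq_of x = sq_of (- x).
Proof. exact: sq_opp_of. Qed.

Lemma sq_of_eq0 x : V x -> (sq_of x = 0 <-> W x).
Proof. by move=> Vx; have := sq_of_eq H Vx (subspace0 sV); rewrite subr0. Qed.

Definition sq_part b (q : Q) := exists y, V y /\ part b y /\ q = sq_of y.

Lemma sq_part0 b : sq_part b 0.
Proof. by exists 0; split; [apply: subspace0 sV | split; [apply: lsa_part0 |]]. Qed.

Lemma sq_partL b a q r : sq_part b q -> sq_part b r -> sq_part b (a *: q + r).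
Proof.
move=> [x [Vx [px ->]]] [y [Vy [py ->]]]; exists (a *: x + y).
by split; [in_V | split; [apply: lsa_partL | rewrite sq_ofZ // sq_ofD //; in_V]].
Qed.

Lemma sq_decomp q : exists q0 q1, sq_part false q0 /\ sq_part true q1 /\ q = q0 + q1.
Proof.
elim/sq_ind: q => x /(sq_gradedV H) [x0 [x1 [V0 [V1 [p0 [p1 ->]]]]]].
by exists (sq_of x0), (sq_of x1); split; [exists x0 | split; [exists x1 | rewrite sq_ofD]].
Qed.

(* If a class has an even representative y0 and an odd one y1, then y0 and -y1 are the
   homogeneous components of y0 - y1, which lies in the graded subspace W. *)
Lemma sq_disj q : sq_part false q -> sq_part true q -> q = 0.
Proof.
move=> [y0 [V0 [p0 ->]]] [y1 [V1 [p1 /(sq_of_eq H V0 V1)]]].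
move=> /(sq_gradedW H) [w0 [w1 [W0 [W1 [pw0 [pw1 /esym ew]]]]]].
have [<- _] := part_decomp_uniq pw0 pw1 p0 (subspaceN (part_subspace _ _) p1) ew.
exact/(sq_of_eq0 (sq_WV H W0)).
Qed.

Lemma sq_brL a q r s : sq_br (a *: q + r) s = a *: sq_br q s + sq_br r s.
Proof.
elim/sq_ind: q => x Vx; elim/sq_ind: r => y Vy; elim/sq_ind: s => z Vz.
by rewrite sq_ofZ // sq_ofD ?sq_br_of ?sq_ofZ ?sq_ofD ?lsa_brL //; in_V.
Qed.

Lemma sq_brR a q r s : sq_br s (a *: q + r) = a *: sq_br s q + sq_br s r.
Proof.
elim/sq_ind: q => x Vx; elim/sq_ind: r => y Vy; elim/sq_ind: s => z Vz.
by rewrite sq_ofZ // sq_ofD ?sq_br_of ?sq_ofZ ?sq_ofD ?lsa_brR //; in_V.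
Qed.

Lemma sq_brP i j q r : sq_part i q -> sq_part j r -> sq_part (addb i j) (sq_br q r).
Proof.
move=> [x [Vx [px ->]]] [y [Vy [py ->]]]; exists (br x y).
by rewrite sq_br_of //; split; [in_V | split; [apply: lsa_brP |]].
Qed.

Lemma sq_skew i j q r : sq_part i q -> sq_part j r ->
  sq_br q r = - (ssign k (i && j) *: sq_br r q).
Proof.
move=> [x [Vx [px ->]]] [y [Vy [py ->]]].
by rewrite !sq_br_of // sq_ofZ ?sq_ofN -?(lsa_skew px py) //; in_V.
Qed.

Lemma sq_jacobi i j l q r s : sq_part i q -> sq_part j r -> sq_part l s ->
  ssign k (i && l) *: sq_br q (sq_br r s) + ssign k (j && i) *: sq_br r (sq_br s q)
  + ssign k (l && j) *: sq_br s (sq_br q r) = 0.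
Proof.
move=> [x [Vx [px ->]]] [y [Vy [py ->]]] [z [Vz [pz ->]]].
rewrite !sq_br_of ?sq_ofZ; try by in_V.
set a := _ *: br x _; set b := _ *: br y _; set c := _ *: br z _.
have [Va Vb Vc] : [/\ V a, V b & V c] by split; in_V.
by rewrite (sq_ofD Va Vb) (sq_ofD (subspaceD sV Va Vb) Vc) (lsa_jacobi px py pz).
Qed.

Definition subquotient : lieSuperAlg k :=
  LieSuperAlg sq_part0 sq_partL sq_decomp sq_disj sq_brL sq_brR sq_brP sq_skew sq_jacobi.

End SubquotientLie.

Section SpanningModuloDerived.
Variables (k : fieldType) (L : lieSuperAlg k).

Lemma finite_dim_homogeneous_span : finite_dim L ->
  exists (I : finType) (u : I -> L) (p : I -> bool),
    (forall i, lsa_part (p i) (u i)) /\ forall x, exists c : I -> k, x = \sum_i c i *: u i.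
Proof.
move=> [n [v vspan]].
have decomp i : exists di : bool -> L, (forall b, lsa_part b (di b)) /\ v i = di false + di true.
  have [v0 [v1 [p0 [p1 ->]]]] := lsa_decomp (v i).
  by exists (fun b => if b then v1 else v0); split => // [[]].
have [d hd] := choice decomp.
exists ('I_n * bool)%type, (fun ib => d ib.1 ib.2), snd.
split=> [[i b] | x]; first exact: (hd i).1.
have [c ->] := vspan x; exists (fun ib => c ib.1).
rewrite -(pair_bigA _ (fun i b => c i *: d i b)); apply: eq_bigr => i _.
by rewrite big_bool /= (hd i).2 scalerDr addrC.
Qed.

Variables (I : finType) (u : I -> L).

Definition spans_mod_derived (J : {set I}) := forall l : L,
  exists (a : I -> k) (w : L), derived w /\ l = \sum_(j in J) a j *: u j + w.

(* If a j0 != 0, then u j0 is a combination of the other u j modulo [L, L]. *)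
Lemma minimal_spans_mod_derived_free J : spans_mod_derived J ->
    (forall j, j \in J -> ~ spans_mod_derived (J :\ j)) ->
  forall a : I -> k, derived (\sum_(j in J) a j *: u j) -> forall j, j \in J -> a j = 0.
Proof.
move=> Jspan Jmin a da j0 j0J; have sD := brsp_subspace (fun _ : L => True) (fun _ => True).
case: (eqVneq (a j0) 0) => // a0n; exfalso; apply: (Jmin j0 j0J) => l.
have [b [w [dw ->]]] := Jspan l; pose c := b j0 / a j0.
exists (fun j => b j - c * a j), (w + c *: \sum_(j in J) a j *: u j).
split; first exact: (subspaceD sD dw (subspaceZ sD c da)).
have -> : \sum_(j in J :\ j0) (b j - c * a j) *: u j = \sum_(j in J) (b j - c * a j) *: u j.
  by rewrite [RHS](big_setD1 j0) //= /c mulfVK // subrr scale0r add0r.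
under [X in _ = X + _]eq_bigr do rewrite scalerBl -scalerA.
by rewrite sumrB -scaler_sumr addrACA addNr addr0.
Qed.

End SpanningModuloDerived.

Section UniversalBound.
Variables (k : fieldType) (L F : lieSuperAlg k) (pi : F -> L) (hpi : is_hom pi).
Hypothesis pi_onto : forall y, exists x, pi x = y.
Variables (I : finType) (u : I -> L) (p : I -> bool) (g : I -> F).
Hypotheses (g_part : forall i, lsa_part (p i) (g i)) (pi_g : forall i, pi (g i) = u i).
Variable J : {set I}.
Hypotheses (J_span : spans_mod_derived u J)
  (J_min : forall j, j \in J -> ~ spans_mod_derived u (J :\ j)).
Local Notation br := (@lsa_br k F).
Local Notation FR := (@brsp k F (fun _ => True) (fun r => pi r = 0)).
Let pi_lin := hpi.1.
Let sD := brsp_subspace (fun _ : F => True) (fun _ => True).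

(* V = span (g_j, j in J) + [F, F]; V / [F, R] is the element of C(L) fed to universality. *)
Definition lifts_span (x : F) :=
  exists (a : I -> k) (w : F), derived w /\ x = \sum_(j in J) a j *: g j + w.

Lemma derived_lifts_span x : derived x -> lifts_span x.
Proof.
by move=> dx; exists (fun _ => 0), x; rewrite big1 ?add0r // => j _; rewrite scale0r.
Qed.

Lemma lifts_span_subspace : subspace lifts_span.
Proof.
split; first by apply: derived_lifts_span; apply: subspace0 sD.
move=> c x y [a [v [dv ->]]] [b [w [dw ->]]].
exists (fun j => c * a j + b j), (c *: v + w); split; first exact: sD.2.
rewrite scalerDr addrACA scaler_sumr -big_split /=; congr (_ + _).
by apply: eq_bigr => j _; rewrite scalerDl scalerA.
Qed.

Lemma graded_lifts_span : graded lifts_span.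
Proof.
move=> x [a [w [/graded_derived [w0 [w1 [d0 [d1 [p0 [p1 ->]]]]]] ->]]].
pose a_ b j := if p j == b then a j else 0.
have part_a b : lsa_part b (\sum_(j in J) a_ b j *: g j).
  apply: (subspace_sum (part_subspace F b)) => j _; rewrite /a_.
  case: eqP => [<-|_]; first exact/(subspaceZ (part_subspace F _))/g_part.
  by rewrite scale0r; apply: lsa_part0.
exists (\sum_(j in J) a_ false j *: g j + w0), (\sum_(j in J) a_ true j *: g j + w1).
split; first by exists (a_ false), w0.
split; first by exists (a_ true), w1.
split; first exact: (subspaceD (part_subspace F _) (part_a _)).
split; first exact: (subspaceD (part_subspace F _) (part_a _)).
rewrite addrACA -big_split /=; congr (_ + _); apply: eq_bigr => j _.
by rewrite /a_ -scalerDl; case: (p j); rewrite /= ?addr0 ?add0r.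
Qed.

Lemma FR_ker x : FR x -> pi x = 0.
Proof.
move: x; apply: span_min (kernel_subspace pi_lin) _ => _ [y [r [_ [pir ->]]]].
by rewrite hpi.2.2 pir br0r.
Qed.

Lemma FR_derived x : FR x -> derived x.
Proof. by move: x; apply: span_min sD _ => _ [y [r [_ [_ ->]]]]; apply: brsp_gen. Qed.

Lemma br_ker_FR r x : pi r = 0 -> FR (br r x).
Proof. by move=> pir; apply: brsp_swap (graded_kernel hpi) (@graded_predT _ _) pir Logic.I. Qed.

Lemma br_FR_ker x r : pi r = 0 -> FR (br x r).
Proof. exact: brsp_gen. Qed.

Lemma lifts_span_subquotient : graded_subquotient lifts_span FR.
Proof.
split.
- exact: lifts_span_subspace.
- exact: brsp_subspace.
- by move=> x /FR_derived; apply: derived_lifts_span.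
- exact: graded_lifts_span.
- exact: graded_brsp (@graded_predT _ _) (graded_kernel hpi).
- by move=> x y _ _; apply/derived_lifts_span/brsp_gen.
- by move=> x y _ /FR_ker; apply: br_FR_ker.
- by move=> x y /FR_ker /br_ker_FR.
Qed.

(* pi x = 0 puts sum_j a_j u_j into [L, L], and minimality of J then kills every a_j. *)
Lemma lifts_span_ker x : lifts_span x -> pi x = 0 -> derived x.
Proof.
move=> [a [w [dw ->]]]; rewrite (linD pi_lin) (lin_sum pi_lin) => /eqP; rewrite addr_eq0 => /eqP ea.
have da : derived (\sum_(j in J) a j *: u j).
  rewrite (eq_bigr (fun j => pi (a j *: g j))) => [|j _]; last by rewrite (linZ pi_lin) pi_g.
  by rewrite ea; apply: (subspaceN (brsp_subspace _ _)); apply: derived_hom.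
have a0 := minimal_spans_mod_derived_free J_span J_min da.
by rewrite big1 ?add0r // => j jJ; rewrite a0 ?scale0r.
Qed.

Lemma lifts_span_onto l : exists2 x, lifts_span x & pi x = l.
Proof.
have [a [w' [dw' ->]]] := J_span l; have [w dw <-] := derived_surj_image hpi pi_onto dw'.
exists (\sum_(j in J) a j *: g j + w); first by exists a, w.
rewrite (linD pi_lin) (lin_sum pi_lin); congr (_ + _).
by apply: eq_bigr => j _; rewrite (linZ pi_lin) pi_g.
Qed.

Local Notation K := (subquotient lifts_span_subquotient).
Local Notation q_of := (sq_of lifts_span_subquotient).

Definition pibar (q : K) : L := pi (sq_val q).

Lemma pibar_of x : lifts_span x -> pibar (q_of x) = pi x.
Proof.
move=> Vx; apply/eqP; rewrite -subr_eq0 -(linB pi_lin).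
by apply/eqP/FR_ker; exact: (sq_of_diff _ Vx).
Qed.

Lemma pibar_hom : is_hom pibar.
Proof.
have sV := lifts_span_subspace.
split.
  move=> a; elim/sq_ind => x Vx; elim/sq_ind => y Vy.
  have Vax := subspaceZ sV a Vx.
  by rewrite sq_ofZ // sq_ofD // !pibar_of //; apply: sV.2.
split; first by move=> b _ [y [Vy [py ->]]]; rewrite pibar_of //; apply: hpi.2.1.
elim/sq_ind => x Vx; elim/sq_ind => y Vy.
rewrite [lsa_br _ _]sq_br_of // !pibar_of ?hpi.2.2 //.
exact: (sq_brV lifts_span_subquotient).
Qed.

(* A bracket [y, z] of F agrees modulo [F, R] with the bracket of lifts of pi y, pi z in V. *)
Lemma derived_q_of v : derived v -> @derived _ K (q_of v).
Proof.
have sV := lifts_span_subspace; have sK := brsp_subspace (fun _ : K => True) (fun _ => True).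
have sQ : subspace (fun x => lifts_span x /\ @derived _ K (q_of x)).
  split; first by split; [apply: subspace0 sV | apply: subspace0 sK].
  move=> a x y [Vx dx] [Vy dy]; split; first exact: sV.2.
  have Vax := subspaceZ sV a Vx.
  by rewrite -sq_ofD // -sq_ofZ //; apply: sK.2.
move=> dv; suff [] : lifts_span v /\ @derived _ K (q_of v) by [].
move: v dv; apply: span_min sQ _ => _ [y [z [_ [_ ->]]]].
have [y' Vy' yy'] := lifts_span_onto (pi y); have [z' Vz' zz'] := lifts_span_onto (pi z).
have Vyz : lifts_span (br y z) by apply/derived_lifts_span/brsp_gen.
split=> //; rewrite (_ : q_of (br y z) = @lsa_br _ K (q_of y') (q_of z')); first exact: brsp_gen.
rewrite [RHS]sq_br_of //; apply: sq_of_eqW => //; first exact: (sq_brV lifts_span_subquotient).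
rewrite (_ : br y z - br y' z' = br (y - y') z + br y' (z - z')); last first.
  by rewrite brBl brBr addrA subrK.
by apply: (subspaceD (brsp_subspace _ _)); [apply: br_ker_FR | apply: br_FR_ker];
  rewrite (linB pi_lin) ?yy' ?zz' subrr.
Qed.

Lemma pibar_inC : inC pibar.
Proof.
split; first exact: pibar_hom.
split; first by move=> l; have [x Vx <-] := lifts_span_onto l; exists (q_of x); rewrite pibar_of.
elim/sq_ind => x Vx; rewrite pibar_of // => pix.
split; first exact/derived_q_of/lifts_span_ker.
elim/sq_ind => y Vy; rewrite [lsa_br _ _]sq_br_of //.
by apply/sq_of_eq0; [apply: (sq_brV lifts_span_subquotient) | apply: br_ker_FR].
Qed.

Lemma universal_qdim_bound (T : lieSuperAlg k) (sigma : T -> L) : universal sigma ->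
  qdim_le (fun x => pi x = 0 /\ derived x) FR (fun t => sigma t = 0) (fun t => t = 0).
Proof.
move=> [[_ [sigma_onto _]] univ]; have [tau [htau tau_sigma]] := univ _ _ pibar_inC.
have tau_onto y : exists t, pibar (tau t) = pibar y.
  by have [t st] := sigma_onto (pibar y); exists t; rewrite tau_sigma.
apply: (qdim_le_lift (f := q_of)) htau.1 _ _.
- split=> [|a x y [px dx] [py dy]]; first by split; [apply: lin0 pi_lin | apply: subspace0 sD].
  by split; [rewrite pi_lin px py scaler0 addr0 | apply: sD.2].
- move=> a x y [_ /derived_lifts_span Vx] [_ /derived_lifts_span Vy].
  by rewrite sq_ofZ // sq_ofD //; apply: (subspaceZ lifts_span_subspace).
- by move=> x [_ /derived_lifts_span Vx] /(sq_of_eq0 _ Vx).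
move=> x [pix dx]; have [t _ tx] := derived_in_image pibar_inC htau tau_onto (derived_q_of dx).
by exists t => //; rewrite -tau_sigma tx pibar_of //; apply: derived_lifts_span.
Qed.

End UniversalBound.

Theorem lemma4p3 (k : fieldType) (hchar : (2%:R : k) != 0 /\ (3%:R : k) != 0)
  (L : lieSuperAlg k) (hL : finite_dim L)
  (X : Type) (par : X -> bool) (F : lieSuperAlg k) (iota : X -> F)
  (hfree : is_free_on par iota)
  (pi : F -> L) (hpi : is_hom pi) (hsurj : forall y, exists x, pi x = y) :
  let R := fun x : F => pi x = 0 in
  let Dnum := fun x : F => R x /\ @derived k F x in
  let Dden := @brsp k F (fun _ : F => True) R in
  (forall (T : lieSuperAlg k) (sigma : T -> L), universal sigma ->
     qdim_le Dnum Dden (fun t : T => sigma t = 0) (fun t : T => t = 0)) /\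
  (forall (Kk : lieSuperAlg k) (psi : Kk -> L), inC psi ->
     quot_hom_image Dnum Dden (fun z : Kk => psi z = 0)).
Proof.
move=> R Dnum Dden; split=> [T sigma univ | Kk psi psiC]; last first.
  exact: (ker_quot_hom_image hfree hpi hsurj psiC).
have [I [u [p [u_part u_span]]]] := finite_dim_homogeneous_span hL.
have [g g_lift] := choice (fun i => hom_lift_homogeneous hpi (hsurj _) (u_part i)).
have span_all : spans_mod_derived u [set: I].
  move=> l; have [c ->] := u_span l; exists c, 0.
  rewrite addr0; split; first exact: subspace0 (brsp_subspace _ _).
  by apply: eq_bigl => i; rewrite inE.
have [J J_span J_min] := exists_minimal_set span_all.
exact: (universal_qdim_bound hpi hsurj (fun i => (g_lift i).1) (fun i => (g_lift i).2)
  J_span J_min univ).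
Qed.
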